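(* Let $n,m\ge 5$ be integers with $m\equiv 1\pmod 4$ and $n\equiv 2\pmod 4$. Then $\gamma_t(C_n\times C_m)\le\frac{(n+2)(m+1)}{4}-3$ and $\gamma_p(C_n\times C_m)\le\frac{(n+2)(m+1)}{4}-2$.
   Context: All graphs are finite, simple and undirected. $C_n$ denotes the cycle of order $n$ and $G\times H$ the Cartesian product of graphs. For a graph $G$ without isolated vertices: a set $D\subseteq V(G)$ is a total dominating set if every vertex of $G$ (including those in $D$) has a neighbour in $D$; $\gamma_t(G)$ is the minimum size of a total dominating set. A set $D\subseteq V(G)$ is a paired dominating set if every vertex outside $D$ has a neighbour in $D$ and the induced subgraph $G[D]$ has a perfect matching; $\gamma_p(G)$ is the minimum size of a paired dominating set. *)

From mathcomp Require Import all_boot.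
Set Implicit Arguments. Unset Strict Implicit. Unset Printing Implicit Defensive.

Definition cycle_adj (n : nat) : rel 'I_n :=
  fun i j => (val j == (val i).+1 %% n) || (val i == (val j).+1 %% n).

Definition cart_adj (T1 T2 : finType) (e1 : rel T1) (e2 : rel T2) : rel (T1 * T2) :=
  fun x y => ((x.1 == y.1) && e2 x.2 y.2) || ((x.2 == y.2) && e1 x.1 y.1).

Definition torus_adj (n m : nat) : rel ('I_n * 'I_m) :=
  cart_adj (@cycle_adj n) (@cycle_adj m).

Definition total_dominating (T : finType) (e : rel T) (D : {set T}) : bool :=
  [forall x, [exists y in D, e x y]].

Definition dominating (T : finType) (e : rel T) (D : {set T}) : bool :=
  [forall x, (x \notin D) ==> [exists y in D, e x y]].

Definition has_perfect_matching_on (T : finType) (e : rel T) (D : {set T}) : bool :=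
  [exists M : {set {set T}},
     partition M D &&
     [forall B in M, [exists u, [exists v, (B == [set u; v]) && e u v]]]].

Definition paired_dominating (T : finType) (e : rel T) (D : {set T}) : bool :=
  dominating e D && has_perfect_matching_on e D.

(* Minimum size of a set satisfying P (default #|T| if none exists). *)
Definition min_card (T : finType) (P : pred {set T}) : nat :=
  \big[minn/#|T|]_(D : {set T} | P D) #|D|.

Definition gamma_t (T : finType) (e : rel T) : nat := min_card (total_dominating e).
Definition gamma_p (T : finType) (e : rel T) : nat := min_card (paired_dominating e).

From mathcomp Require Import all_boot zify.
Set Implicit Arguments. Unset Strict Implicit. Unset Printing Implicit Defensive.

(* Write n = 4a+2 and m = 4b+1, so that (n+2)(m+1)/4 = (2a+2)(2b+1).  Both
   sets consist of vertical pairs of rows placed in the 2b+1 columns of even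
   index: a column j = 0 (mod 4) takes the pairs {4k, 4k+1} (k < a) completed
   by {4a-1, 4a}, a column j = 2 (mod 4) the pairs {4k+2, 4k+3} completed by
   {4a+1, 0}.  Each such column dominates itself vertically and each odd
   column is covered by its two even neighbours.  Since the even columns 0
   and 4b are adjacent in C_m, some rows are redundant: the paired set keeps
   only the pairs {4k, 4k+1} in column 4b (column 4b-2 being completed by
   {4a, 4a+1} instead), losing 2 vertices; the total set drops row 0 of
   columns 0 and 4b and row 4a-1 of column 4b, losing 3. *)

Lemma val_ordS n (i : 'I_n) :
  (i.+1 = n /\ ordS i = 0 :> nat) \/ (i.+1 < n /\ ordS i = i.+1 :> nat).
Proof.
have /orP [/eqP eq_Sin | lt_Sin] : (i.+1 == n) || (i.+1 < n) by rewrite -leq_eqVlt.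
  by left; rewrite /= eq_Sin modnn.
by right; rewrite /= modn_small.
Qed.

Lemma val_ord_pred n (i : 'I_n) :
  (i = 0 :> nat /\ ord_pred i = n.-1 :> nat) \/ (0 < i /\ ord_pred i = i.-1 :> nat).
Proof.
have lt_in := ltn_ord i; rewrite /=; case: (posnP i) => [-> | i_gt0].
  by left; rewrite add0n modn_small // prednK //; lia.
by right; rewrite (_ : (i + n).-1 = i.-1 + n) ?modnDr ?modn_small //; lia.
Qed.

Lemma cycle_adj_ordS n (i : 'I_n) : cycle_adj i (ordS i).
Proof. by rewrite /cycle_adj eqxx. Qed.

Lemma cycle_adj_ord_pred n (i : 'I_n) : cycle_adj i (ord_pred i).
Proof. by apply/orP; right; apply/eqP; exact: (esym (congr1 val (ord_predK i))). Qed.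

Lemma total_dominating_dominating (T : finType) (e : rel T) (D : {set T}) :
  total_dominating e D -> dominating e D.
Proof. by move/forallP=> domD; apply/forallP=> x; apply/implyP=> _; apply: domD. Qed.

Lemma min_card_le (T : finType) (P : pred {set T}) (D : {set T}) :
  P D -> min_card P <= #|D|.
Proof.
move=> PD; rewrite /min_card.
have: D \in index_enum {set T} by rewrite mem_index_enum.
elim: (index_enum _) => // D' r IHr; rewrite inE big_cons.
case/predU1P => [<- | Dr]; first by rewrite PD geq_minl.
by case: ifP => _; rewrite ?geq_min IHr ?orbT.
Qed.

Lemma involution_perfect_matching (T : finType) (e : rel T) (D : {set T}) (f : T -> T) :
  {in D, forall x, [/\ f x \in D, f (f x) = x & e x (f x)]} ->
  has_perfect_matching_on e D.
Proof.
move=> fD; pose pair x := [set x; f x].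
have pairE x y : x \in D -> y \in pair x -> pair y = pair x.
  move=> Dx; rewrite !inE => /orP [/eqP -> // | /eqP ->].
  by have [_ ffx _] := fD x Dx; rewrite /pair ffx setUC.
apply/existsP; exists (pair @: D); apply/andP; split.
  apply/and3P; split.
  - apply/eqP/setP => y; rewrite cover_imset; apply/bigcupP/idP => [[x Dx] | Dy].
      by rewrite !inE => /orP [/eqP -> // | /eqP ->]; have [] := fD x Dx.
    by exists y; rewrite // !inE eqxx.
  - apply/trivIsetP => A B /imsetP [x Dx ->] /imsetP [y Dy ->] neq_xy.
    rewrite -setI_eq0; apply/set0Pn => -[z]; rewrite inE => /andP [xz yz].
    by move: neq_xy; rewrite -(pairE x z Dx xz) -(pairE y z Dy yz) eqxx.
  - by apply/imsetP => -[x _ /setP /(_ x)]; rewrite !inE eqxx.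
apply/forallP => B; apply/implyP => /imsetP [x Dx ->].
have [_ _ adj_x] := fD x Dx.
by apply/existsP; exists x; apply/existsP; exists (f x); rewrite eqxx adj_x.
Qed.

(* Vertex (i, j) of C_n x C_m is row i of column j; [P j] selects the rows of column j. *)
Definition column_set n m (P : nat -> nat -> bool) : {set 'I_n * 'I_m} :=
  [set x : 'I_n * 'I_m | P x.2 x.1].

Lemma column_set_total_dominating n m (P : nat -> nat -> bool) :
  (forall (i : 'I_n) (j : 'I_m),
     [|| P j (ordS i), P j (ord_pred i), P (ordS j) i | P (ord_pred j) i]) ->
  total_dominating (@torus_adj n m) (column_set n m P).
Proof.
move=> domP; apply/forallP => -[i j]; apply/existsP.
have adj1 i' : cycle_adj i i' -> torus_adj (i, j) (i', j).
  by move=> ii'; rewrite /torus_adj /cart_adj /= eqxx ii' orbT.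
have adj2 j' : cycle_adj j j' -> torus_adj (i, j) (i, j').
  by move=> jj'; rewrite /torus_adj /cart_adj /= eqxx jj'.
case/or4P: (domP i j) => Px.
- by exists (ordS i, j); rewrite inE Px adj1 ?cycle_adj_ordS.
- by exists (ord_pred i, j); rewrite inE Px adj1 ?cycle_adj_ord_pred.
- by exists (i, ordS j); rewrite inE Px adj2 ?cycle_adj_ordS.
- by exists (i, ord_pred j); rewrite inE Px adj2 ?cycle_adj_ord_pred.
Qed.

Lemma column_set_perfect_matching n m (P top : nat -> nat -> bool) :
  (forall (i : 'I_n) (j : 'I_m), P j i ->
     (top j i && P j (ordS i) && ~~ top j (ordS i))
     || (~~ top j i && P j (ord_pred i) && top j (ord_pred i))) ->
  has_perfect_matching_on (@torus_adj n m) (column_set n m P).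
Proof.
move=> matchP.
pose f (x : 'I_n * 'I_m) := (if top x.2 x.1 then ordS x.1 else ord_pred x.1, x.2).
apply: (@involution_perfect_matching _ _ _ f) => -[i j]; rewrite inE /f /= => Pji.
have adj i' : cycle_adj i i' -> torus_adj (i, j) (i', j).
  by move=> ii'; rewrite /torus_adj /cart_adj /= eqxx ii' orbT.
case/orP: (matchP i j Pji) => /andP [/andP [topi Pi']] topi'.
- by rewrite topi (negbTE topi') inE Pi' ordSK adj ?cycle_adj_ordS.
- by rewrite (negbTE topi) topi' inE Pi' ord_predK adj ?cycle_adj_ord_pred.
Qed.

Lemma card_column_set n m (P : nat -> nat -> bool) :
  #|column_set n m P| = \sum_(0 <= j < m) count (P j) (iota 0 n).
Proof.
pose F (i : 'I_n) (j : 'I_m) := if P j i then 1 else 0.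
rewrite -sum1_card big_mkcond /= (eq_bigr (fun x => F x.1 x.2)) => [|x _]; last by rewrite inE.
rewrite -pair_bigA exchange_big big_mkord; apply: eq_bigr => j _.
by rewrite -big_mkcond -(big_mkord (P j) (fun _ => 1)) sum1_count /index_iota subn0.
Qed.

Lemma count_predU_le (T : Type) (p q : pred T) s :
  count (fun x => p x || q x) s <= count p s + count q s.
Proof. by rewrite -count_predUI leq_addr. Qed.

Lemma count_pred1_uniq_le (T : eqType) (x : T) s : uniq s -> count (pred1 x) s <= 1.
Proof. by move=> uniq_s; rewrite count_uniq_mem ?leq_b1. Qed.

Lemma count_subpred_lt (T : eqType) (p q : pred T) s x :
  subpred p q -> x \in s -> q x -> ~~ p x -> count p s < count q s.
Proof.
move=> pq sx qx npx.
have -> : count q s = count p s + count (predD q p) s.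
  rewrite -count_predUI (@eq_count _ (predI _ _) pred0) ?count_pred0 ?addn0; last first.
    by move=> y /=; case: (boolP (p y)) => [/pq -> | _]; rewrite ?andbF.
  by apply: eq_count => y /=; case: (boolP (p y)) => [/pq -> | _].
by rewrite -addn1 leq_add2l -has_count; apply/hasP; exists x; rewrite //= qx npx.
Qed.

Lemma count_iota_prefix (p : pred nat) k N :
  k <= N -> count (fun i => (i < k) && p i) (iota 0 N) = count p (iota 0 k).
Proof.
move=> le_kN; rewrite -(subnKC le_kN) iotaD count_cat add0n.
rewrite (@eq_in_count _ _ p) => [|i]; last by rewrite mem_iota => /andP [_ ->].
rewrite (@eq_in_count _ _ pred0 (iota k _)) ?count_pred0 ?addn0 // => i.
by rewrite mem_iota => /andP [le_ki _]; rewrite ltnNge le_ki.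
Qed.

Lemma count_mod_iota (q : pred nat) d k :
  count (fun i => q (i %% d)) (iota 0 (k * d)) = k * count q (iota 0 d).
Proof.
elim: k => // k IHk; rewrite mulSnr iotaD count_cat IHk add0n mulSnr.
rewrite -[in iota (k * d) d](addn0 (k * d)) iotaDl count_map; congr (_ + _).
apply: eq_in_count => i; rewrite mem_iota add0n => /andP [_ lt_id] /=.
by rewrite modnMDl modn_small.
Qed.

Lemma sum_even_weights k c : \sum_(0 <= j < (2 * k).+1) (~~ odd j) * c = k.+1 * c.
Proof.
elim: k => [|k IHk]; first by rewrite big_nat1 mul1n.
rewrite (_ : (2 * k.+1).+1 = ((2 * k).+1).+2); last by lia.
rewrite big_nat_recr // big_nat_recr //=.
by rewrite IHk mul2n odd_double /= mul0n addn0 mul1n [RHS]mulSnr.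
Qed.

Lemma leq_sum_even_weights (F : nat -> nat) k c d0 dk : 0 < k ->
  F 0 + d0 <= c -> F (2 * k) + dk <= c ->
  (forall j, 0 < j < 2 * k -> F j <= (~~ odd j) * c) ->
  \sum_(0 <= j < (2 * k).+1) F j + (d0 + dk) <= k.+1 * c.
Proof.
move=> k_gt0 F0 Fk Fmid; rewrite -(sum_even_weights k c).
have k2_gt0 : 0 < 2 * k by rewrite muln_gt0.
rewrite !big_nat_recr //= (big_ltn (F := F)) // (big_ltn (F := fun j => ~~ odd j * c)) //.
have : \sum_(1 <= j < 2 * k) F j <= \sum_(1 <= j < 2 * k) (~~ odd j) * c.
  by rewrite big_seq_cond [X in _ <= X]big_seq_cond; apply: leq_sum => j;
     rewrite mem_index_iota andbT => /Fmid.
lia.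
Qed.

Inductive column := Blank | Low | LowEnd | HighWrap | HighEnd | LowEnd' | LowEnd''.

Section Torus.

Variables a b : nat.
Hypotheses (a_gt0 : 0 < a) (b_gt0 : 0 < b).
Local Notation n := (4 * a + 2).
Local Notation m := (4 * b + 1).

Definition low_pairs i := (i < 4 * a) && (i %% 4 <= 1).
Definition high_pairs i := (i < 4 * a) && (1 < i %% 4).
Definition low_end i := [|| low_pairs i, i == 4 * a - 1 | i == 4 * a].

Definition rows (c : column) (i : nat) : bool :=
  match c with
  | Blank => false
  | Low => low_pairs i
  | LowEnd => low_end i
  | HighWrap => [|| high_pairs i, i == 4 * a + 1 | i == 0]
  | HighEnd => [|| high_pairs i, i == 4 * a | i == 4 * a + 1]
  | LowEnd' => low_end i && (i != 0)
  | LowEnd'' => [&& low_end i, i != 0 & i != 4 * a - 1]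
  end.

(* [top c i]: in a column of type [c], row [i] is paired with row [i+1]
   rather than with row [i-1]. *)
Definition top (c : column) (i : nat) : bool :=
  match c with
  | Low => (i < 4 * a) && (i %% 4 == 0)
  | LowEnd => (i < 4 * a) && (i %% 4 == 0) || (i == 4 * a - 1)
  | HighWrap => (i < 4 * a) && (i %% 4 == 2) || (i == 4 * a + 1)
  | HighEnd => (i < 4 * a) && (i %% 4 == 2) || (i == 4 * a)
  | _ => false
  end.

Definition paired_column j :=
  if odd j then Blank else if j == 4 * b then Low
  else if j %% 4 == 0 then LowEnd else if j == 4 * b - 2 then HighEnd else HighWrap.

Definition total_column j :=
  if odd j then Blank else if j == 0 then LowEnd' else if j == 4 * b then LowEnd''
  else if j %% 4 == 0 then LowEnd else HighWrap.

Definition dominated_column (c succ pred : column) :=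
  forall i : 'I_n, [|| rows c (ordS i), rows c (ord_pred i), rows succ i | rows pred i].

(* Rewrite an innermost [if] whose condition [lia] decides, else split on it. *)
Ltac decide_if :=
  match goal with
  | |- context [if ?c then _ else _] =>
    lazymatch c with context [if _ then _ else _] => fail | _ => idtac end;
    first [ have -> : c = true by lia
          | have -> : c = false by lia
          | case: (boolP c) => ? ]; rewrite /=
  end.

(* Replace the ordinal [i] by its value, with [ordS i] and [ord_pred i] expressed
   through it. *)
Ltac cycle_nats i :=
  have := ltn_ord i;
  case: (val_ordS i) => -[+ ->]; case: (val_ord_pred i) => -[+ ->];
  move: (i : nat) => ? ? ? ?.

Ltac row_lia i :=
  cycle_nats i; rewrite /rows /top /low_end /low_pairs /high_pairs /=; lia.

Lemma paired_column_dominated (j : 'I_m) :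
  dominated_column (paired_column j) (paired_column (ordS j)) (paired_column (ord_pred j)).
Proof. by rewrite /paired_column; cycle_nats j; repeat decide_if; move=> i; row_lia i. Qed.

Lemma total_column_dominated (j : 'I_m) :
  dominated_column (total_column j) (total_column (ordS j)) (total_column (ord_pred j)).
Proof. by rewrite /total_column; cycle_nats j; repeat decide_if; move=> i; row_lia i. Qed.

Lemma paired_column_matched (j : nat) (i : 'I_n) (c := paired_column j) :
  rows c i ->
  (top c i && rows c (ordS i) && ~~ top c (ordS i))
  || (~~ top c i && rows c (ord_pred i) && top c (ord_pred i)).
Proof. by rewrite /c /paired_column; repeat case: ifP => _; row_lia i. Qed.

Definition row_bound (c : column) :=
  match c with
  | Blank => 0
  | Low | LowEnd'' => 2 * a
  | LowEnd' => 2 * a + 1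
  | _ => 2 * a + 2
  end.

Lemma count_low_pairs : count low_pairs (iota 0 n) = 2 * a.
Proof.
rewrite /low_pairs count_iota_prefix ?leq_addr // mulnC.
by rewrite (count_mod_iota (fun r => r <= 1)) mulnC.
Qed.

Lemma count_high_pairs : count high_pairs (iota 0 n) = 2 * a.
Proof.
rewrite /high_pairs count_iota_prefix ?leq_addr // mulnC.
by rewrite (count_mod_iota (fun r => 1 < r)) mulnC.
Qed.

Lemma count_with_two_rows (p : pred nat) x y :
  count (fun i => [|| p i, i == x | i == y]) (iota 0 n) <= count p (iota 0 n) + 2.
Proof.
apply: leq_trans (count_predU_le _ _ _) _; rewrite leq_add2l.
apply: leq_trans (count_predU_le _ _ _) _.
by rewrite -[2]/(1 + 1); apply: leq_add; apply: count_pred1_uniq_le; apply: iota_uniq.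
Qed.

Lemma count_rows_le (c : column) : count (rows c) (iota 0 n) <= row_bound c.
Proof.
have low_end_le : count low_end (iota 0 n) <= 2 * a + 2.
  by rewrite -count_low_pairs count_with_two_rows.
have low_end'_lt : count (rows LowEnd') (iota 0 n) < count low_end (iota 0 n).
  by apply: (count_subpred_lt (x := 0)) => [i | | |];
    rewrite ?mem_iota /rows /low_end /low_pairs /=; lia.
have low_end''_lt : count (rows LowEnd'') (iota 0 n) < count (rows LowEnd') (iota 0 n).
  by apply: (count_subpred_lt (x := 4 * a - 1)) => [i | | |];
    rewrite ?mem_iota /rows /low_end /low_pairs /=; lia.
case: c; rewrite /row_bound.
- exact/eq_leq/count_pred0.
- exact/eq_leq/count_low_pairs.
- exact: low_end_le.
- by rewrite -count_high_pairs count_with_two_rows.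
- by rewrite -count_high_pairs count_with_two_rows.
- lia.
- lia.
Qed.

Lemma paired_column_count j :
  count (rows (paired_column j)) (iota 0 n) + 2 * (j == 4 * b) <= (~~ odd j) * (2 * a + 2).
Proof.
have := count_rows_le (paired_column j); move: (count _ _) => k.
by rewrite /paired_column; repeat decide_if; lia.
Qed.

Lemma total_column_count j :
  count (rows (total_column j)) (iota 0 n) + ((j == 0) + 2 * (j == 4 * b))
  <= (~~ odd j) * (2 * a + 2).
Proof.
have := count_rows_le (total_column j); move: (count _ _) => k.
by rewrite /total_column; repeat decide_if; lia.
Qed.

Definition paired_set := column_set n m (fun j => rows (paired_column j)).
Definition total_set := column_set n m (fun j => rows (total_column j)).

Lemma paired_set_paired_dominating : paired_dominating (@torus_adj n m) paired_set.
Proof.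
apply/andP; split.
  apply/total_dominating_dominating/column_set_total_dominating => i j.
  exact: paired_column_dominated.
apply: (@column_set_perfect_matching _ _ _ (fun j => top (paired_column j))) => i j.
exact: paired_column_matched.
Qed.

Lemma total_set_total_dominating : total_dominating (@torus_adj n m) total_set.
Proof. by apply: column_set_total_dominating => i j; apply: total_column_dominated. Qed.

Lemma card_paired_set : #|paired_set| + 2 <= (2 * b).+1 * (2 * a + 2).
Proof.
rewrite card_column_set (_ : 4 * b + 1 = (2 * (2 * b)).+1); last by lia.
apply: (leq_sum_even_weights (d0 := 0) (dk := 2)); first by lia.
- by have := paired_column_count 0; lia.
- by have := paired_column_count (2 * (2 * b)); lia.
- by move=> j _; apply: leq_trans (paired_column_count j); apply: leq_addr.
Qed.

Lemma card_total_set : #|total_set| + 3 <= (2 * b).+1 * (2 * a + 2).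
Proof.
rewrite card_column_set (_ : 4 * b + 1 = (2 * (2 * b)).+1); last by lia.
apply: (leq_sum_even_weights (d0 := 1) (dk := 2)); first by lia.
- by have := total_column_count 0; lia.
- by have := total_column_count (2 * (2 * b)); lia.
- by move=> j _; apply: leq_trans (total_column_count j); apply: leq_addr.
Qed.

End Torus.

Theorem corollary5p1 (n m : nat) :
  5 <= n -> 5 <= m -> m %% 4 = 1 -> n %% 4 = 2 ->
  gamma_t (@torus_adj n m) <= (n + 2) * (m + 1) %/ 4 - 3 /\
  gamma_p (@torus_adj n m) <= (n + 2) * (m + 1) %/ 4 - 2.
Proof.
move=> n_ge5 m_ge5 m_mod4 n_mod4.
have [a a_gt0 ->] : exists2 a, 0 < a & n = 4 * a + 2 by exists (n %/ 4); lia.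
have [b b_gt0 ->] : exists2 b, 0 < b & m = 4 * b + 1 by exists (m %/ 4); lia.
have -> : (4 * a + 2 + 2) * (4 * b + 1 + 1) %/ 4 = (2 * b).+1 * (2 * a + 2).
  by rewrite (_ : (4 * a + 2 + 2) * _ = (2 * b).+1 * (2 * a + 2) * 4) ?mulnK //; nia.
split.
- apply: leq_trans (min_card_le (total_set_total_dominating a_gt0 b_gt0)) _.
  by have := card_total_set a_gt0 b_gt0; lia.
- apply: leq_trans (min_card_le (paired_set_paired_dominating a_gt0 b_gt0)) _.
  by have := card_paired_set a_gt0 b_gt0; lia.
Qed.
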